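(* For any odd prime $p$, any integer $\alpha\ge1$ and any integer $n\ge0$, \[ b_4\!\left(p^{2\alpha}n+\frac{(8i+p)p^{2\alpha-1}-1}{8}\right)\equiv 0 \pmod 2 \] for each $i=1,2,\ldots,p-1$.
   Context: For a positive integer $\ell$, $b_\ell(n)$ denotes the number of partitions of $n$ having no part divisible by $\ell$. *)

From mathcomp Require Import all_boot.
Set Implicit Arguments. Unset Strict Implicit. Unset Printing Implicit Defensive.

(* A partition of n is encoded by its multiplicity function:
   f k = number of times the part k occurs (k = 1..n), with f 0 = 0 and
   \sum_k k * f k = n.  Every multiplicity is at most n, so f can be taken
   of type {ffun 'I_n.+1 -> 'I_n.+1}; this is a bijection with partitions. *)
Definition partition_mult (n : nat) (f : {ffun 'I_n.+1 -> 'I_n.+1}) : bool :=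
  (f ord0 == 0 :> nat) && (\sum_(k < n.+1) k * f k == n).

Definition b (l n : nat) : nat :=
  #|[set f : {ffun 'I_n.+1 -> 'I_n.+1} |
      partition_mult f && [forall k : 'I_n.+1, (l %| k) ==> (f k == 0 :> nat)]]|.

From mathcomp Require Import all_boot all_algebra zify ring.
Set Implicit Arguments. Unset Strict Implicit. Unset Printing Implicit Defensive.
Import GRing.Theory.

(* Modulo 2 the generating function of b_4 is G = prod_(4 ∤ k) 1 / (1 + q^k).
   Euler's identity prod_(k > 0) (1 + q^k) * prod_(k odd) (1 + q^k) = 1 and
   Jacobi's triple product, obtained from its finite q-binomial form, show that
   G = sum_m q^(m (m + 1) / 2) in characteristic 2; hence b_4(N) is even unless
   8N + 1 is a square.  For the N of the statement, 8N + 1 = p^(2 alpha - 1) u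
   with u prime to p, so the p-adic valuation of 8N + 1 is odd.  All power
   series are handled as polynomials modulo X^(N + 1). *)

Lemma big_ord_blocks (R : Type) (idx : R) (op : Monoid.law idx) d n (F : nat -> R) :
  \big[op/idx]_(k < d * n) F k = \big[op/idx]_(j < n) \big[op/idx]_(r < d) F (d * j + r).
Proof.
elim: n => [|n IHn]; first by rewrite muln0 !big_ord0.
by rewrite mulnSr big_split_ord /= IHn big_ord_recr.
Qed.

Lemma big_ord_dvdn (R : Type) (idx : R) (op : Monoid.law idx) d n (P : pred nat)
    (F : nat -> R) :
  0 < d ->
  \big[op/idx]_(k < d * n | (d %| k) && P k) F k = \big[op/idx]_(j < n | P (d * j)) F (d * j).
Proof.
case: d => // d _; rewrite big_mkcond [RHS]big_mkcond.
rewrite (big_ord_blocks _ _ _ (fun k => if (d.+1 %| k) && P k then F k else idx)).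
apply: eq_bigr => j _; rewrite big_ord_recl addn0 dvdn_mulr //= big1 ?Monoid.mulm1 // => r _.
by rewrite /bump /= add1n dvdn_addr ?dvdn_mulr // gtnNdvd ?ltnS ?ltn_ord.
Qed.

Section EqModXn.
Variable R : idomainType.
Implicit Types (a b c d u : {poly R}) (M : nat).
Local Open Scope ring_scope.

Definition eqmodXn M a b : bool := 'X^M %| a - b.

Lemma eqmodXn_refl M a : eqmodXn M a a.
Proof. by rewrite /eqmodXn subrr dvdp0. Qed.

Lemma eqmodXn_sym M a b : eqmodXn M a b -> eqmodXn M b a.
Proof. by rewrite /eqmodXn -dvdpNr opprB. Qed.

Lemma eqmodXn_trans M a b c : eqmodXn M a b -> eqmodXn M b c -> eqmodXn M a c.
Proof. by move=> hab hbc; rewrite /eqmodXn -(subrKA b); apply: dvdp_add. Qed.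

Lemma eqmodXnD M a b c d :
  eqmodXn M a b -> eqmodXn M c d -> eqmodXn M (a + c) (b + d).
Proof. by move=> hab hcd; rewrite /eqmodXn opprD addrACA; apply: dvdp_add. Qed.

Lemma eqmodXnM M a b c d :
  eqmodXn M a b -> eqmodXn M c d -> eqmodXn M (a * c) (b * d).
Proof.
move=> hab hcd; rewrite /eqmodXn -(subrKA (a * d)) -mulrBr -mulrBl.
by apply: dvdp_add; [apply: dvdp_mull | apply: dvdp_mulr].
Qed.

Lemma eqmodXn_sum M (I : Type) (r : seq I) (P : pred I) (F G : I -> {poly R}) :
  (forall i, P i -> eqmodXn M (F i) (G i)) ->
  eqmodXn M (\sum_(i <- r | P i) F i) (\sum_(i <- r | P i) G i).
Proof.
move=> eqFG; elim/big_rec2: _ => [|i x y Pi]; first exact: eqmodXn_refl.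
exact: eqmodXnD (eqFG i Pi).
Qed.

Lemma eqmodXn_prod M (I : Type) (r : seq I) (P : pred I) (F G : I -> {poly R}) :
  (forall i, P i -> eqmodXn M (F i) (G i)) ->
  eqmodXn M (\prod_(i <- r | P i) F i) (\prod_(i <- r | P i) G i).
Proof.
move=> eqFG; elim/big_rec2: _ => [|i x y Pi]; first exact: eqmodXn_refl.
exact: eqmodXnM (eqFG i Pi).
Qed.

Lemma eqmodXn_Xn0 M k : (M <= k)%N -> eqmodXn M 'X^k 0.
Proof. by move=> le_Mk; rewrite /eqmodXn subr0 dvdp_exp2l. Qed.

Lemma eqmodXn_DMXn M k a c : (M <= k)%N -> eqmodXn M (a + c * 'X^k) a.
Proof. by move=> le_Mk; rewrite /eqmodXn addrC addKr dvdp_mull ?dvdp_exp2l. Qed.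

Lemma coef_eqmodXn M a b n : eqmodXn M a b -> (n < M)%N -> a`_n = b`_n.
Proof.
move=> /(Pdiv.IdomainMonic.dvdpP (monicXn R M))[c /eqP].
by rewrite subr_eq => /eqP -> lt_nM; rewrite coefD coefMXn lt_nM add0r.
Qed.

Lemma eqmodXn_mul2l M u a b :
  u.[0] != 0 -> eqmodXn M (u * a) (u * b) = eqmodXn M a b.
Proof.
move=> u0; rewrite /eqmodXn -mulrBr Gauss_dvdpr // coprimep_sym coprimep_expr //.
by have := coprimep_XsubC u 0; rewrite subr0 rootE u0.
Qed.

Lemma eqmodXn_prod_stab M L K (P : pred nat) (F : nat -> {poly R}) :
  (forall k, (L <= k)%N -> P k -> eqmodXn M (F k) 1) -> (L <= K)%N ->
  eqmodXn M (\prod_(k < K | P k) F k) (\prod_(k < L | P k) F k).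
Proof.
move=> F1 le_LK; rewrite -!(big_mkord P) (big_cat_nat (leq0n L) le_LK) /=.
rewrite -[X in eqmodXn _ _ X]mulr1; apply: eqmodXnM (eqmodXn_refl _ _) _.
rewrite -[X in eqmodXn _ _ X](big1 (op := *%R) (index_iota L K) P (fun=> 1)) //.
rewrite big_seq_cond [X in eqmodXn _ _ X]big_seq_cond; apply: eqmodXn_prod => k /andP[].
by rewrite mem_index_iota => /andP[le_Lk _]; exact: F1.
Qed.

Lemma eqmodXn_prod_1DXn M L K (P : pred nat) : (M <= L <= K)%N ->
  eqmodXn M (\prod_(k < K | P k) (1 + 'X^k)) (\prod_(k < L | P k) (1 + 'X^k)).
Proof.
case/andP=> le_ML le_LK.
apply: (@eqmodXn_prod_stab M L K P (fun k => 1 + 'X^k)) le_LK => k le_Lk _.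
by rewrite -[X in _ + X]mul1r eqmodXn_DMXn // (leq_trans le_ML).
Qed.

End EqModXn.

(** * Gaussian binomials and the finite Jacobi triple product *)

Section GaussianBinomial.
Variables (R : comNzRingType) (q : R).
Local Open Scope ring_scope.

Fixpoint qbinom (m i : nat) : R :=
  match m, i with
  | 0, 0 => 1
  | 0, _.+1 => 0
  | m'.+1, 0 => 1
  | m'.+1, i'.+1 => qbinom m' i + q ^+ (m' - i') * qbinom m' i'
  end.

Definition qpoch (m : nat) : R := \prod_(l < m) (1 - q ^+ l.+1).

Lemma qbinom0 m : qbinom m 0 = 1.
Proof. by case: m. Qed.

Lemma qbinom_small m i : (m < i)%N -> qbinom m i = 0.
Proof. by elim: m i => [|m IH] [|i] //= lt_mi; rewrite !IH ?mulr0 ?addr0 // ltnW. Qed.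

Lemma qbinomnn m : qbinom m m = 1.
Proof. by elim: m => //= m ->; rewrite qbinom_small // subnn mulr1 add0r. Qed.

Lemma qpoch0 : qpoch 0 = 1.
Proof. by rewrite /qpoch big_ord0. Qed.

Lemma qpochS m : qpoch m.+1 = qpoch m * (1 - q ^+ m.+1).
Proof. by rewrite /qpoch big_ord_recr. Qed.

Lemma qbinom_qpoch m i : (i <= m)%N -> qbinom m i * qpoch i * qpoch (m - i) = qpoch m.
Proof.
elim: m i => [|m IH] [|i] //=; rewrite ?subn0 ?qbinom0 ?qpoch0 ?mul1r //.
rewrite ltnS leq_eqVlt => /orP[/eqP ->|lt_im].
  by rewrite qbinom_small // !subnn expr0 qbinomnn add0r !mul1r qpoch0 mulr1.
have [d def_d] : exists d, (m - i = d.+1)%N by exists (m - i).-1; lia.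
have e1 := IH i.+1 lt_im; have e2 := IH i (ltnW lt_im).
rewrite subSS def_d in e2 *; rewrite (_ : (m - i.+1 = d)%N) in e1; last by lia.
have qYZ : q ^+ d.+1 * q ^+ i.+1 = q ^+ m.+1 by rewrite -exprD; congr (_ ^+ _); lia.
rewrite qpochS in e1; rewrite qpochS in e2; rewrite !qpochS.
transitivity ((qbinom m i.+1 * (qpoch i * (1 - q ^+ i.+1)) * qpoch d) * (1 - q ^+ d.+1)
  + q ^+ d.+1 * (1 - q ^+ i.+1) * (qbinom m i * qpoch i * (qpoch d * (1 - q ^+ d.+1)))).
  by ring.
by rewrite e1 e2 -qYZ; ring.
Qed.

Lemma qbinomial_prod m (w z : R) :
  \prod_(j < m) (w + z * q ^+ j) =
  \sum_(i < m.+1) q ^+ 'C(i, 2) * qbinom m i * z ^+ i * w ^+ (m - i).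
Proof.
elim: m => [|m IH]; first by rewrite big_ord0 big_ord1 /= !mulr1.
rewrite big_ord_recr /= IH [RHS]big_ord_recl mulrDr !big_distrl /=.
rewrite [X in _ = _ + X](eq_bigr (fun i : 'I_m.+1 =>
   q ^+ 'C(i.+1, 2) * qbinom m i.+1 * z ^+ i.+1 * w ^+ (m - i) +
   q ^+ 'C(i, 2) * qbinom m i * z ^+ i * w ^+ (m - i) * (z * q ^+ m))); last first.
  move=> i _; rewrite /bump /= add1n subSS mulrDr !mulrDl add0n exprS; congr (_ + _).
  have eC : ('C(i.+1, 2) + (m - i) = 'C(i, 2) + m)%N.
    by rewrite binS bin1 -addnA subnKC // -ltnS.
  transitivity ((q ^+ 'C(i.+1, 2) * q ^+ (m - i)) * qbinom m i * z ^+ i * z * w ^+ (m - i)).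
    by ring.
  by rewrite -exprD eC exprD; ring.
rewrite big_split /= addrA; congr (_ + _).
rewrite [X in _ + X]big_ord_recr /= qbinom_small // mulr0 !mul0r addr0.
rewrite [LHS]big_ord_recl /= !qbinom0 /= !expr0 subn0 !mul1r exprSr; congr (_ + _).
by apply: eq_bigr => i _; rewrite /bump /= add1n -mulrA -exprSr subnSK.
Qed.

End GaussianBinomial.

(* As [i] runs over [0 .. 2n], [jacobi_exp n i] runs over the triangular
   numbers [T_(2k - 1) = k (2k - 1)] and [T_(2k) = k (2k + 1)]. *)
Definition jacobi_exp (n i : nat) : nat :=
  if n <= i then (i - n) * (2 * (i - n) - 1) else (n - i) * (2 * (n - i) + 1).

Lemma jacobi_exp_sqr n i : exists x, 8 * jacobi_exp n i + 1 = x * x.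
Proof.
rewrite /jacobi_exp; case: leqP => _.
- case: (i - n) => [|k]; first by exists 1.
  by exists (4 * k.+1 - 1); nia.
- by exists (4 * (n - i) + 1); nia.
Qed.

Lemma jacobi_exp_large M i : (i < M) || (3 * M < i) -> M <= jacobi_exp (2 * M) i.
Proof.
rewrite /jacobi_exp => /orP out; case: (leqP (2 * M) i) => le_2Mi.
- have : M < i - 2 * M by case: out; lia.
  by move: (i - 2 * M) => k lt_Mk; rewrite (leq_trans (ltnW lt_Mk)) // leq_pmulr; lia.
- have : M < 2 * M - i by case: out; lia.
  by move: (2 * M - i) => k lt_Mk; rewrite (leq_trans (ltnW lt_Mk)) // leq_pmulr; lia.
Qed.

Lemma jacobi_exp_shift n i : 0 < n -> i <= 2 * n ->
  4 * 'C(i, 2) + (4 * n - 1) * (2 * n - i) =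
  4 * 'C(n, 2) + n * (4 * n - 1) + jacobi_exp n i.
Proof.
move=> n_gt0 le_i2n; have e2C k : 2 * 'C(k, 2) = k * k.-1.
  by rewrite -(bin1 k.-1) mul_bin_diag.
have := e2C i; have := e2C n; move: 'C(n, 2) 'C(i, 2) => cn ci ecn eci.
have [n' en] : exists n', n = n'.+1 by exists n.-1; lia.
have -> : 4 * n - 1 = 4 * n' + 3 by lia.
rewrite /jacobi_exp; case: leqP => le_ni.
- have [k ek] : exists k, i = n + k by exists (i - n); lia.
  have [j ej] : exists j, n = k + j by exists (n - k); lia.
  have -> : 2 * n - i = j by lia.
  have -> : i - n = k by lia.
  subst i; clear le_i2n le_ni; case: k ej eci => [|k] ej eci.
    by rewrite ej in ecn; nia.
  have -> : 2 * k.+1 - 1 = 2 * k + 1 by lia.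
  by rewrite /= in eci; nia.
- have [k ek] : exists k, n = i + k.+1 by exists (n - i.+1); lia.
  have -> : 2 * n - i = n + k.+1 by lia.
  have -> : n - i = k.+1 by lia.
  by clear le_i2n le_ni; case: i ek eci => [|i] ek eci /=; nia.
Qed.

Section XnProducts.
Variable R : comNzRingType.
Local Open Scope ring_scope.

Lemma prod_1DXn_horner0 K (P : pred nat) : ~~ P 0%N ->
  (\prod_(k < K | P k) (1 + 'X^k) : {poly R}).[0] = 1.
Proof.
move=> nP0; rewrite horner_prod big1 // => k Pk.
have k_gt0 : (0 < k)%N by case: (nat_of_ord k) Pk nP0 => // ->.
by rewrite hornerD hornerXn expr0n eqn0Ngt k_gt0 addr0 hornerE.
Qed.

Lemma qpoch_Xn_horner0 d m : (0 < d)%N -> (qpoch ('X^d : {poly R}) m).[0] = 1.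
Proof.
move=> d_gt0; rewrite horner_prod big1 // => l _.
by rewrite -exprM hornerD hornerN hornerXn expr0n muln_eq0 eqn0Ngt d_gt0 subr0 hornerE.
Qed.

Lemma qpoch_Xn_prod d m : (0 < d)%N ->
  qpoch ('X^d : {poly R}) m = \prod_(k < d * m.+1 | (d %| k)%N && (0 < k)%N) (1 - 'X^k).
Proof.
move=> d_gt0; rewrite (@big_ord_dvdn _ _ _ d m.+1 (fun k => 0 < k)%N (fun k => 1 - 'X^k) d_gt0).
rewrite big_mkcond big_ord_recl /= muln0 mul1r; apply: eq_bigr => j _.
by rewrite /bump /= add1n muln_gt0 d_gt0 exprM.
Qed.

Lemma prod_odd_blocks n :
  \prod_(k < 4 * n | odd k) (1 + 'X^k) =
  \prod_(j < n) ((1 + 'X^(4 * j + 1)) * (1 + 'X^(4 * j + 3))) :> {poly R}.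
Proof.
rewrite big_mkcond (big_ord_blocks _ _ _ (fun k => if odd k then 1 + 'X^k else 1)).
apply: eq_bigr => j _; have odd4 r : odd (4 * j + r) = odd r by rewrite oddD oddM.
by rewrite !big_ord_recr big_ord0 /= !odd4 /= !mul1r mulr1.
Qed.

Lemma jacobi_triple_lhs n : (0 < n)%N ->
  \prod_(j < 2 * n) ('X^(4 * n - 1) + 'X^(4 * j)) =
  'X^(4 * 'C(n, 2) + n * (4 * n - 1)) * \prod_(k < 4 * n | odd k) (1 + 'X^k) :> {poly R}.
Proof.
move=> n_gt0; rewrite mul2n -addnn big_split_ord /=.
rewrite (eq_bigr (fun j : 'I_n => 'X^(4 * j) * (1 + 'X^(4 * (n - j.+1) + 3)))); last first.
  move=> j _; rewrite mulrDr mulr1 -exprD addrC; congr (_ + 'X^_).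
  by have := ltn_ord j; lia.
rewrite [X in _ * X](eq_bigr (fun j : 'I_n => 'X^(4 * n - 1) * (1 + 'X^(4 * j + 1)))); last first.
  by move=> j _; rewrite mulrDr mulr1 -exprD; congr (_ + 'X^_); lia.
rewrite !big_split /= prodr_const card_ord -exprM prodrXr -big_distrr /=.
rewrite -(big_mkord xpredT (fun j => j)) bin2_sum prod_odd_blocks big_split /=.
have -> : \prod_(j < n) (1 + 'X^(4 * (n - j.+1) + 3)) =
          \prod_(j < n) (1 + 'X^(4 * j + 3)) :> {poly R}.
  rewrite -(big_mkord xpredT (fun j => 1 + 'X^(4 * j + 3))).
  by rewrite big_rev_mkord subn0; apply: eq_bigr.
by rewrite exprD [(n * _)%N]mulnC; ring.
Qed.

Lemma jacobi_triple_finite n : (0 < n)%N ->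
  \sum_(i < (2 * n).+1) 'X^(jacobi_exp n i) * qbinom ('X^4) (2 * n) i =
  \prod_(k < 4 * n | odd k) (1 + 'X^k) :> {poly R}.
Proof.
move=> n_gt0; apply: (monic_lreg (monicXn R (4 * 'C(n, 2) + n * (4 * n - 1)))).
rewrite -jacobi_triple_lhs // (eq_bigr (fun j : 'I_(2 * n) =>
  'X^(4 * n - 1) + 1 * ('X^4) ^+ j)) => [|j _]; last by rewrite mul1r exprM.
rewrite qbinomial_prod mulr_sumr; apply: eq_bigr => i _.
have le_i2n : (i <= 2 * n)%N by rewrite -ltnS.
by rewrite expr1n mulr1 -!exprM mulrA -exprD -jacobi_exp_shift // exprD; ring.
Qed.

End XnProducts.

Section Truncation.
Variable R : idomainType.
Implicit Types (d m M : nat).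
Local Open Scope ring_scope.

Lemma qpoch_Xn_stab d M m : (0 < d)%N -> (M <= m)%N ->
  eqmodXn M (qpoch ('X^d : {poly R}) m) (qpoch 'X^d M).
Proof.
move=> d_gt0 le_Mm; rewrite /qpoch.
apply: (@eqmodXn_prod_stab _ M M m xpredT (fun l => 1 - ('X^d) ^+ l.+1)) le_Mm => l le_Ml _.
by rewrite -exprM -mulN1r eqmodXn_DMXn //; nia.
Qed.

(* [qpoch i], [qpoch (m - i)] and [qpoch m] all agree with [qpoch M] modulo
   [X^M], so the factorisation [qbinom_qpoch] reduces to [qbinom m i = 1]. *)
Lemma qbinom_Xn_window d m i M : (0 < d)%N -> (M <= i <= m - M)%N ->
  eqmodXn M (qbinom ('X^d : {poly R}) m i * qpoch 'X^d M) 1.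
Proof.
move=> d_gt0 /andP[le_Mi le_imM].
have qpochM0 : (qpoch ('X^d : {poly R}) M).[0] != 0 by rewrite qpoch_Xn_horner0 ?oner_neq0.
rewrite -(eqmodXn_mul2l _ _ _ qpochM0) mulr1 mulrCA mulrA.
apply: eqmodXn_trans (qpoch_Xn_stab d_gt0 (_ : M <= m)%N); last by lia.
rewrite -(qbinom_qpoch _ (_ : i <= m)%N); last by lia.
apply: eqmodXnM; first apply: eqmodXnM (eqmodXn_refl _ _) _.
- exact/eqmodXn_sym/qpoch_Xn_stab.
- by apply/eqmodXn_sym/qpoch_Xn_stab; lia.
Qed.

Lemma jacobi_sum_eqmodXn M : (0 < M)%N ->
  eqmodXn M (\sum_(i < (4 * M).+1) 'X^(jacobi_exp (2 * M) i))
    (\prod_(k < 8 * M | odd k) (1 + 'X^k) * qpoch ('X^4 : {poly R}) M).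
Proof.
move=> M_gt0; have e4 : (4 * M = 2 * (2 * M))%N by rewrite mulnA.
have e8 : (8 * M = 4 * (2 * M))%N by rewrite mulnA.
rewrite e8 -jacobi_triple_finite; last by lia.
rewrite mulr_suml e4; apply: eqmodXn_sum => i _; rewrite -mulrA.
have [/andP win | out] := boolP ((M <= i) && (i <= 2 * (2 * M) - M))%N.
- rewrite -[X in eqmodXn _ X]mulr1; apply: eqmodXnM (eqmodXn_refl _ _) _.
  exact/eqmodXn_sym/qbinom_Xn_window/andP.
- have large : (M <= jacobi_exp (2 * M) i)%N.
    by apply: jacobi_exp_large; move: out; rewrite negb_and -!ltnNge; lia.
  apply: eqmodXn_trans (eqmodXn_Xn0 _ large) _; apply: eqmodXn_sym.
  by rewrite -[_ * _]add0r mulrC eqmodXn_DMXn.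
Qed.

End Truncation.

(** * The generating polynomial of b_l *)

Section GeneratingPolynomial.
Variable R : comNzRingType.
Local Open Scope ring_scope.

(* The factor of the part [k] records its multiplicity [j]: modulo [X^(N + 1)]
   it is [1 / (1 - X^k)] when [~~ (l %| k)] and [1] otherwise. *)
Definition bgen (l N : nat) : {poly R} :=
  \prod_(k < N.+1) \sum_(j < N.+1) (if (l %| k)%N ==> (j == 0 :> nat) then 'X^(k * j) else 0).

Lemma b_coef l N : (b l N)%:R = (bgen l N)`_N.
Proof.
rewrite /bgen bigA_distr_bigA /= coef_sum /b -sum1dep_card natr_sum big_mkcond /=.
apply: eq_bigr => f _.
have [allf | /forallPn[k notfk]] :=
  boolP [forall k : 'I_N.+1, (l %| k)%N ==> (f k == 0 :> nat)].
- rewrite (eq_bigr (fun k : 'I_N.+1 => 'X^(k * f k))); last first.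
    by move=> k _; move/forallP: allf => /(_ k) ->.
  rewrite prodrXr coefXn /partition_mult andbT.
  have /forallP/(_ ord0) := allf; rewrite dvdn0 /= => ->.
  by rewrite eq_sym; case: (_ == _).
- by rewrite andbF (bigD1 k) //= (negbTE notfk) mul0r coef0.
Qed.

End GeneratingPolynomial.

Section GeneratingPolynomialInverse.
Variable R : idomainType.
Local Open Scope ring_scope.

Lemma bgen_eqmodXn l N :
  eqmodXn N.+1 (bgen R l N * \prod_(k < N.+1 | ~~ (l %| k)%N) (1 - 'X^k)) 1.
Proof.
rewrite /bgen [X in _ * X]big_mkcond -big_split /=.
rewrite -[X in eqmodXn _ _ X](big1 (op := *%R) (index_enum 'I_N.+1) xpredT (fun=> 1)) //.
apply: eqmodXn_prod => k _; have [dvd_lk | ndvd_lk] /= := boolP (l %| k)%N.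
- by rewrite mulr1 big_ord_recl muln0 big1 ?addr0 ?eqmodXn_refl.
- rewrite (eq_bigr (fun j : 'I_N.+1 => ('X^k) ^+ j)) => [|j _]; last by rewrite exprM.
  rewrite mulrC -opprB mulNr -subrX1 opprB -exprM -mulN1r eqmodXn_DMXn //.
  by move: ndvd_lk; case: (nat_of_ord k) => [|k']; rewrite ?dvdn0 // mulSn leq_addr.
Qed.

End GeneratingPolynomialInverse.

(** * Characteristic two *)

Section CharacteristicTwo.
Local Open Scope ring_scope.
Variables (R : idomainType) (charR2 : 2 \in [pchar R]).

Let charP2 : 2 \in [pchar {poly R}].
Proof. by rewrite pchar_poly. Qed.

Lemma mul_1DXn_pchar2 k : (1 + 'X^k) * (1 + 'X^k) = 1 + 'X^(2 * k) :> {poly R}.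
Proof.
rewrite mul2n -addnn exprD.
transitivity (1 + 'X^k * 'X^k + ('X^k + 'X^k) : {poly R}); first by ring.
by rewrite addrr_pchar2 // addr0.
Qed.

Lemma sub1Xn_pchar2 k : 1 - 'X^k = 1 + 'X^k :> {poly R}.
Proof. exact: GRing.subr_pchar2. Qed.

(* [D_(2K) = D_K^2 O_(2K)] in characteristic 2, and both [D] and [O] are
   stable modulo [X^M] once [M <= K]. *)
Lemma euler_odd_eqmodXn M K : (M <= K)%N ->
  eqmodXn M (\prod_(k < K | (0 < k)%N) (1 + 'X^k) * \prod_(k < K | odd k) (1 + 'X^k))
    (1 : {poly R}).
Proof.
move=> le_MK; set D := \prod_(k < K | (0 < k)%N) _.
have D_sq : D * D = \prod_(k < 2 * K | (2 %| k)%N && (0 < k)%N) (1 + 'X^k).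
  rewrite (@big_ord_dvdn _ _ _ 2 K (fun k => 0 < k)%N (fun k => 1 + 'X^k)) // -big_split /=.
  apply: eq_big => [k | k _]; first by rewrite muln_gt0.
  exact: mul_1DXn_pchar2.
have D2K : \prod_(k < 2 * K | (0 < k)%N) (1 + 'X^k) =
    D * (D * \prod_(k < 2 * K | odd k) (1 + 'X^k)).
  rewrite mulrA D_sq (bigID (fun k : 'I_(2 * K) => 2 %| k)%N) /=.
  congr (_ * _); apply: eq_bigl => k; first by rewrite andbC.
  by rewrite dvdn2 negbK; case: (nat_of_ord k).
have le_M2K : (M <= K <= 2 * K)%N by rewrite le_MK leq_pmull.
rewrite -(eqmodXn_mul2l _ _ _ (_ : D.[0] != 0)); last by rewrite prod_1DXn_horner0 ?oner_neq0.
apply: (@eqmodXn_trans _ _ _ (D * (D * \prod_(k < 2 * K | odd k) (1 + 'X^k)))).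
  apply/eqmodXnM/eqmodXnM; rewrite ?eqmodXn_refl //.
  exact/eqmodXn_sym/eqmodXn_prod_1DXn.
by rewrite -D2K mulr1 eqmodXn_prod_1DXn.
Qed.

Lemma bgen4_eqmodXn N :
  eqmodXn N.+1 (bgen R 4 N) (\sum_(i < (4 * N.+1).+1) 'X^(jacobi_exp (2 * N.+1) i)).
Proof.
set M := N.+1; set S := \sum_(i < _) _.
pose H : {poly R} := \prod_(k < M | ~~ (4 %| k)%N) (1 + 'X^k).
pose O : {poly R} := \prod_(k < 8 * M | odd k) (1 + 'X^k).
pose D : {poly R} := \prod_(k < 8 * M | (0 < k)%N) (1 + 'X^k).
have GH : eqmodXn M (bgen R 4 N * H) 1.
  rewrite (_ : H = \prod_(k < M | ~~ (4 %| k)%N) (1 - 'X^k)) ?bgen_eqmodXn //.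
  by apply: eq_bigr => k _; rewrite sub1Xn_pchar2.
have SOQ : eqmodXn M S (O * qpoch 'X^4 M) := jacobi_sum_eqmodXn R (ltn0Sn N).
have HQD : eqmodXn M (H * qpoch 'X^4 M) D.
  rewrite qpoch_Xn_prod // (eq_bigr (fun k : 'I_(4 * M.+1) => 1 + 'X^k)) => [|k _]; last first.
    exact: sub1Xn_pchar2.
  rewrite /D (bigID (fun k : 'I_(8 * M) => 4 %| k)%N) /= mulrC; apply: eqmodXnM.
    rewrite (eq_bigl (fun k : 'I_(8 * M) => (4 %| k)%N && (0 < k)%N)) => [|k]; last exact: andbC.
    apply/eqmodXn_sym/(eqmodXn_prod_1DXn _ (fun k => (4 %| k) && (0 < k))%N).
    by rewrite /M; apply/andP; split; lia.
  rewrite (eq_bigl (fun k : 'I_(8 * M) => ~~ (4 %| k)%N)) => [|k].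
    by apply/eqmodXn_sym/(eqmodXn_prod_1DXn _ (fun k => ~~ (4 %| k))%N); rewrite leqnn leq_pmull.
  by case: (nat_of_ord k) => [|k']; rewrite ?dvdn0 ?andbT.
have SH : eqmodXn M (S * H) 1.
  apply: eqmodXn_trans (eqmodXnM SOQ (eqmodXn_refl _ H)) _.
  rewrite -mulrA; apply: eqmodXn_trans (eqmodXnM (eqmodXn_refl _ O) _) _.
    by rewrite mulrC; exact: HQD.
  by rewrite mulrC euler_odd_eqmodXn // leq_pmull.
rewrite -[X in eqmodXn _ X _]mulr1.
apply: eqmodXn_trans (eqmodXnM (eqmodXn_refl _ _) (eqmodXn_sym SH)) _.
by rewrite mulrCA -[X in eqmodXn _ _ X]mulr1; apply: eqmodXnM (eqmodXn_refl _ _) GH.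
Qed.

End CharacteristicTwo.

Lemma b4_even N : (forall x, 8 * N + 1 != x * x) -> 2 %| b 4 N.
Proof.
have char2 := pchar_Fp (isT : prime 2).
move=> nsq; rewrite (dvdn_pcharf char2) b_coef (coef_eqmodXn (bgen4_eqmodXn char2 N)) //.
rewrite coef_sum big1 // => i _; rewrite coefXn.
have [x sqx] := jacobi_exp_sqr (2 * N.+1) i.
by case: eqP => // eN; move: (nsq x); rewrite eN sqx eqxx.
Qed.

Lemma logn_sqr_nodd p x : ~~ odd (logn p (x * x)).
Proof.
have [-> | x_gt0] := posnP x; first by rewrite logn0.
by rewrite lognM // addnn odd_double.
Qed.

Lemma logn_pexpM p a u : prime p -> ~~ (p %| u) -> logn p (p ^ a * u) = a.
Proof.
move=> p_pr ndvd_pu; have u_gt0 : 0 < u by case: u ndvd_pu; rewrite ?dvdn0.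
by rewrite lognM ?u_gt0 ?expn_gt0 ?prime_gt0 // pfactorK // logn_coprime ?addn0 ?prime_coprime.
Qed.

Lemma pexpM_neq_sqr p a u x : prime p -> odd a -> ~~ (p %| u) -> p ^ a * u != x * x.
Proof.
move=> p_pr odd_a ndvd_pu; apply/eqP => e.
by move: (logn_sqr_nodd p x); rewrite -e logn_pexpM // odd_a.
Qed.

Lemma sqr_odd_mod8 p : odd p -> p ^ 2 = 1 %[mod 8].
Proof.
rewrite -modnXm -(@odd_mod p 8) //.
by case: (p %% 8) (ltn_pmod p (isT : 0 < 8)) => [|[|[|[|[|[|[|[|r]]]]]]]].
Qed.

Theorem theorem3p10 (p alpha n i : nat) :
  prime p -> odd p -> 1 <= alpha -> 1 <= i <= p.-1 ->
  b 4 (p ^ (2 * alpha) * n + ((8 * i + p) * p ^ (2 * alpha - 1) - 1) %/ 8) %% 2 = 0.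
Proof.
move=> p_pr odd_p alpha_gt0 /andP[i_gt0 le_ip].
set a := 2 * alpha - 1; set P := p ^ a.
have ea : 2 * alpha = a.+1 by rewrite /a; lia.
have odd_a : odd a by apply/negbFE; rewrite -oddS -ea oddM.
have [q epP] : exists q, p * P = 8 * q + 1.
  have pP_mod8 : p * P = 1 %[mod 8].
    by rewrite -expnS -ea mulnC expnM sqr_odd_mod8 // oddX odd_p orbT.
  by exists (p * P %/ 8); rewrite {1}(divn_eq (p * P) 8) pP_mod8 mulnC.
have -> : ((8 * i + p) * P - 1) %/ 8 = i * P + q.
  by rewrite mulnDl -mulnA epP addnA addnK -mulnDr mulKn.
rewrite ea expnS -/P; apply/eqP/b4_even => x.
have -> : 8 * (p * P * n + (i * P + q)) + 1 = p ^ a * (8 * i + p * (8 * n + 1)) by nia.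
apply: pexpM_neq_sqr => //.
rewrite dvdn_addl ?(dvdn_mulr _ (dvdnn p)) // Gauss_dvdr; last first.
  by rewrite -[8]/(2 ^ 3) coprime_pexpr // coprimen2.
by rewrite gtnNdvd //; lia.
Qed.
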